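(* Let $M$ and $N$ be $\lambda$-terms. If there is no $M'$ with $M \twoheadrightarrow_\beta M'$ and $\mathrm{BT}^c(M') \le \mathrm{BT}^c(N)$ (i.e. no reduct of $M$ improves $N$ globally), then $M \neq_\beta N$.
   Context: Untyped $\lambda$-calculus modulo $\alpha$. A head reduction step is a $\beta$-step $\lambda x_1\ldots x_n.(\lambda y.P)QQ_1\ldots Q_m \to \lambda x_1\ldots x_n.P[y:=Q]Q_1\ldots Q_m$ ($n,m\ge0$); a head normal form (hnf) is a term $\lambda x_1\ldots x_n.\,yQ_1\ldots Q_m$. The clocked Böhm tree $\mathrm{BT}^c(M)$ is defined coinductively: $\bot$ if $M$ has no hnf; otherwise, if the head reduction of $M$ to hnf is $M \to_h^k \lambda x_1\ldots x_n.\,yM_1\ldots M_m$ ($k$ steps), then $\mathrm{BT}^c(M)$ is $\lambda x_1\ldots x_n.\,y\,\mathrm{BT}^c(M_1)\ldots\mathrm{BT}^c(M_m)$ with its root node annotated by $k$. Positions are sequences over $\{0,1,2\}$ ($0$: body of abstraction, $1$: function part, $2$: argument of application). For annotated trees, $T_1 \le T_2$ means: $T_1,T_2$ coincide after erasing annotations, and at every position $p$ either neither subtree at $p$ has a root annotation or both do with annotations $k_1 \le k_2$. *)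

From Stdlib Require Import Arith List Relations ClassicalEpsilon.
Import ListNotations.

(** Terms (de Bruijn indices: alpha-equivalence is syntactic equality). *)
Inductive term : Type :=
| Var : nat -> term
| App : term -> term -> term
| Lam : term -> term.

Fixpoint lift (c : nat) (t : term) : term :=
  match t with
  | Var n => if c <=? n then Var (S n) else Var n
  | App a b => App (lift c a) (lift c b)
  | Lam a => Lam (lift (S c) a)
  end.

(** subst n u t : t[n := u], capture-avoiding; indices above n are decremented. *)
Fixpoint subst (n : nat) (u : term) (t : term) : term :=
  match t with
  | Var m => if m =? n then u else if n <? m then Var (pred m) else Var m
  | App a b => App (subst n u a) (subst n u b)
  | Lam a => Lam (subst (S n) (lift 0 u) a)
  end.

Inductive beta : term -> term -> Prop :=
| beta_redex : forall P Q, beta (App (Lam P) Q) (subst 0 Q P)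
| beta_appl : forall M M' N, beta M M' -> beta (App M N) (App M' N)
| beta_appr : forall M N N', beta N N' -> beta (App M N) (App M N')
| beta_lam : forall M M', beta M M' -> beta (Lam M) (Lam M').

Definition beta_red : term -> term -> Prop := clos_refl_trans term beta.
Definition beta_eq : term -> term -> Prop := clos_refl_sym_trans term beta.

Definition is_lam (t : term) : bool :=
  match t with Lam _ => true | _ => false end.

(** Head reduction step:
    \x1..xn.(\y.P) Q Q1..Qm  ->_h  \x1..xn. P[y:=Q] Q1..Qm. *)
Inductive hred : term -> term -> Prop :=
| hred_redex : forall P Q, hred (App (Lam P) Q) (subst 0 Q P)
| hred_app : forall M M' N, is_lam M = false -> hred M M' -> hred (App M N) (App M' N)
| hred_lam : forall M M', hred M M' -> hred (Lam M) (Lam M').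

Inductive hred_n : nat -> term -> term -> Prop :=
| hred_n_0 : forall M, hred_n 0 M M
| hred_n_S : forall k M M' M'', hred M M' -> hred_n k M' M'' -> hred_n (S k) M M''.

Inductive is_neutral : term -> Prop :=
| neutral_var : forall x, is_neutral (Var x)
| neutral_app : forall h u, is_neutral h -> is_neutral (App h u).

Inductive is_hnf : term -> Prop :=
| hnf_neutral : forall h, is_neutral h -> is_hnf h
| hnf_lam : forall h, is_hnf h -> is_hnf (Lam h).

(** Annotated (clocked) Boehm-like trees: possibly infinite lambda-trees with
    bottom, each node carrying an optional annotation. *)
CoInductive atree : Type :=
| ABot : atree
| AVar : option nat -> nat -> atree
| AApp : option nat -> atree -> atree -> atree
| ALam : option nat -> atree -> atree.

(** If M head-reduces in k steps to the hnf H, return (k, H) (unique, since head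
    reduction is deterministic); otherwise None.  Classical choice. *)
Definition hnf_data (M : term) : option (nat * term) :=
  match excluded_middle_informative
          (exists p : nat * term, hred_n (fst p) M (snd p) /\ is_hnf (snd p)) with
  | left e => Some (proj1_sig (constructive_indefinite_description _ e))
  | right _ => None
  end.

(** Traversal states: a full term whose Boehm tree is wanted, or a part of the
    spine of an already computed head normal form. *)
Inductive bt_state : Type :=
| BFull : term -> bt_state
| BSpine : term -> bt_state.

CoFixpoint bt_go (s : bt_state) : atree :=
  match s with
  | BFull M =>
      match hnf_data M with
      | None => ABot
      | Some (k, H) =>
          match H with
          | Var x => AVar (Some k) x
          | App H1 H2 => AApp (Some k) (bt_go (BSpine H1)) (bt_go (BFull H2))
          | Lam H' => ALam (Some k) (bt_go (BSpine H'))
          end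
      end
  | BSpine H =>
      match H with
      | Var x => AVar None x
      | App H1 H2 => AApp None (bt_go (BSpine H1)) (bt_go (BFull H2))
      | Lam H' => ALam None (bt_go (BSpine H'))
      end
  end.

Definition BTc (M : term) : atree := bt_go (BFull M).

(** Positions: 0 = body of abstraction, 1 = function part, 2 = argument. *)
Inductive dir : Type := D0 | D1 | D2.
Definition position := list dir.

Fixpoint subtree_at (T : atree) (p : position) : option atree :=
  match p with
  | [] => Some T
  | d :: p' =>
      match d, T with
      | D0, ALam _ t => subtree_at t p'
      | D1, AApp _ t _ => subtree_at t p'
      | D2, AApp _ _ u => subtree_at u p'
      | _, _ => None
      end
  end.

Inductive label : Type := LBot | LVar (x : nat) | LApp | LLam.

Definition root_label (T : atree) : label :=
  match T with
  | ABot => LBot | AVar _ x => LVar x | AApp _ _ _ => LApp | ALam _ _ => LLam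
  end.

Definition root_ann (T : atree) : option nat :=
  match T with
  | ABot => None | AVar a _ => a | AApp a _ _ => a | ALam a _ => a
  end.

Definition ann_le (a b : option nat) : Prop :=
  match a, b with
  | None, None => True
  | Some k1, Some k2 => k1 <= k2
  | _, _ => False
  end.

Definition tree_le (T1 T2 : atree) : Prop :=
  forall p : position,
    match subtree_at T1 p, subtree_at T2 p with
    | None, None => True
    | Some S1, Some S2 => root_label S1 = root_label S2 /\ ann_le (root_ann S1) (root_ann S2)
    | _, _ => False
    end.

(* By Church-Rosser, M =_beta N yields a common reduct Z of M and N, so it suffices that
   N ->>_beta Z implies BT^c(Z) <= BT^c(N): reduction preserves the Boehm tree and can only
   lower its clocks.  If N head-reduces in k steps to
   a head normal form H, then along the reduction N ->> Z, done as parallel steps, each head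
   step is either absorbed or matched by a single head step, so Z head-reduces in at most k
   steps to a head normal form that is a reduct of H, hence of the same shape as H.
   Conversely, if Z has a head normal form then so has N, by standardization: a reduction
   to a head normal form can be rearranged to start with weak-head steps. *)

From Stdlib Require Import Arith List Relations ClassicalEpsilon Lia.

Lemma clos_rt_map {A B : Type} (R : relation A) (S : relation B) (f : A -> B) :
  (forall x y, R x y -> S (f x) (f y)) ->
  forall x y, clos_refl_trans A R x y -> clos_refl_trans B S (f x) (f y).
Proof.
  intros Hf x y Hxy; induction Hxy.
  - apply rt_step; auto.
  - apply rt_refl.
  - eapply rt_trans; eauto.
Qed.

Ltac index_cases := repeat (cbn [lift subst pred]; match goal with
 | |- context [?a =? ?b] => destruct (Nat.eqb_spec a b)
 | |- context [?a <=? ?b] => destruct (Nat.leb_spec a b)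
 | |- context [?a <? ?b] => destruct (Nat.ltb_spec a b)
 | |- context [match ?n with 0 => _ | S _ => _ end] => destruct n
 end); try lia; try reflexivity; try (f_equal; lia).

Lemma lift_lift t : forall c d, c <= d -> lift (S d) (lift c t) = lift c (lift d t).
Proof.
  induction t; intros c d Hcd; simpl.
  - index_cases.
  - rewrite IHt1, IHt2; auto.
  - rewrite IHt by lia. reflexivity.
Qed.

Lemma subst_lift t : forall n u, subst n u (lift n t) = t.
Proof.
  induction t; intros m u; simpl.
  - index_cases.
  - rewrite IHt1, IHt2; auto.
  - rewrite IHt; auto.
Qed.

Lemma lift_subst_le t : forall c n u, c <= n ->
  lift c (subst n u t) = subst (S n) (lift c u) (lift c t).
Proof.
  induction t; intros c m u Hc; simpl.
  - index_cases.
  - rewrite IHt1, IHt2; auto.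
  - rewrite IHt, lift_lift by lia. reflexivity.
Qed.

Lemma lift_subst_ge t : forall c n u, n <= c ->
  lift c (subst n u t) = subst n (lift c u) (lift (S c) t).
Proof.
  induction t; intros c m u Hc; simpl.
  - index_cases.
  - rewrite IHt1, IHt2; auto.
  - rewrite IHt, lift_lift by lia. reflexivity.
Qed.

Lemma subst_subst t : forall i j u v, i <= j ->
  subst j u (subst i v t) = subst i (subst j u v) (subst (S j) (lift i u) t).
Proof.
  induction t; intros i j u v Hij; simpl.
  - index_cases. rewrite subst_lift. reflexivity.
  - rewrite IHt1, IHt2; auto.
  - rewrite IHt, lift_subst_le, lift_lift by lia. reflexivity.
Qed.

(** * Parallel reduction and Church-Rosser *)

Inductive par : term -> term -> Prop :=
| par_var x : par (Var x) (Var x)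
| par_app M M' N N' : par M M' -> par N N' -> par (App M N) (App M' N')
| par_lam M M' : par M M' -> par (Lam M) (Lam M')
| par_redex P P' Q Q' : par P P' -> par Q Q' -> par (App (Lam P) Q) (subst 0 Q' P').

Lemma par_refl M : par M M.
Proof. induction M; constructor; auto. Qed.

Lemma par_lift M N : par M N -> forall c, par (lift c M) (lift c N).
Proof.
  induction 1; intros c; simpl.
  - destruct (c <=? x); constructor.
  - constructor; auto.
  - constructor; auto.
  - rewrite lift_subst_ge by lia. constructor; auto.
Qed.

Lemma par_subst M M' : par M M' ->
  forall n u u', par u u' -> par (subst n u M) (subst n u' M').
Proof.
  induction 1; intros n u u' Hu; simpl.
  - index_cases; auto using par_var.
  - constructor; auto.
  - constructor; auto using par_lift.
  - rewrite subst_subst by lia. constructor; auto using par_lift.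
Qed.

(* Takahashi's complete development; [par_develop] is its triangle property. *)
Fixpoint develop (t : term) : term :=
  match t with
  | Var x => Var x
  | App (Lam P) Q => subst 0 (develop Q) (develop P)
  | App M N => App (develop M) (develop N)
  | Lam M => Lam (develop M)
  end.

Lemma par_develop M N : par M N -> par N (develop M).
Proof.
  induction 1; simpl.
  - constructor.
  - destruct M; try (constructor; auto; fail).
    inversion H; subst. inversion IHpar1; subst. constructor; auto.
  - constructor; auto.
  - apply par_subst; auto.
Qed.

Lemma beta_par M N : beta M N -> par M N.
Proof. induction 1; constructor; auto using par_refl. Qed.

Lemma beta_red_app M M' N N' :
  beta_red M M' -> beta_red N N' -> beta_red (App M N) (App M' N').
Proof.
  intros HM HN. apply rt_trans with (App M' N).
  - apply (clos_rt_map beta beta (fun X => App X N)); auto using beta_appl.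
  - apply (clos_rt_map beta beta (App M')); auto using beta_appr.
Qed.

Lemma beta_red_lam M M' : beta_red M M' -> beta_red (Lam M) (Lam M').
Proof. apply clos_rt_map, beta_lam. Qed.

Lemma par_beta_red M N : par M N -> beta_red M N.
Proof.
  induction 1.
  - apply rt_refl.
  - apply beta_red_app; auto.
  - apply beta_red_lam; auto.
  - eapply rt_trans; [apply beta_red_app; [apply beta_red_lam|]; eauto|].
    apply rt_step; constructor.
Qed.

Lemma par_strip M P : beta_red M P ->
  forall N, par M N -> exists Z, beta_red N Z /\ par P Z.
Proof.
  induction 1 as [M P HMP|M|M P Q _ IH1 _ IH2]; intros N HN.
  - exists (develop M). split.
    + apply par_beta_red, par_develop, HN.
    + apply par_develop, beta_par, HMP.
  - exists N; split; [apply rt_refl | exact HN].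
  - destruct (IH1 N HN) as [Z1 [HNZ1 HPZ1]].
    destruct (IH2 Z1 HPZ1) as [Z2 [HZ1Z2 HQZ2]].
    exists Z2; split; [eapply rt_trans; eauto | exact HQZ2].
Qed.

Lemma beta_red_confluent M N : beta_red M N ->
  forall P, beta_red M P -> exists Z, beta_red N Z /\ beta_red P Z.
Proof.
  induction 1 as [M N HMN|M|M N Q _ IH1 _ IH2]; intros P HMP.
  - destruct (par_strip _ _ HMP N (beta_par _ _ HMN)) as [Z [HNZ HPZ]].
    exists Z; split; [exact HNZ | apply par_beta_red, HPZ].
  - exists P; split; [exact HMP | apply rt_refl].
  - destruct (IH1 P HMP) as [Z1 [HNZ1 HPZ1]].
    destruct (IH2 Z1 HNZ1) as [Z2 [HQZ2 HZ1Z2]].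
    exists Z2; split; [exact HQZ2 | eapply rt_trans; eauto].
Qed.

Theorem church_rosser M N : beta_eq M N -> exists Z, beta_red M Z /\ beta_red N Z.
Proof.
  induction 1 as [M N HMN|M|M N _ IH|M N P _ IH1 _ IH2].
  - exists N; split; [apply rt_step, HMN | apply rt_refl].
  - exists M; split; apply rt_refl.
  - destruct IH as [Z [HMZ HNZ]]; eauto.
  - destruct IH1 as [Z1 [HMZ1 HNZ1]].
    destruct IH2 as [Z2 [HNZ2 HPZ2]].
    destruct (beta_red_confluent _ _ HNZ1 _ HNZ2) as [Z [HZ1Z HZ2Z]].
    exists Z; split; eapply rt_trans; eauto.
Qed.

Lemma neutral_hred_irreducible h X : is_neutral h -> ~ hred h X.
Proof.
  intros Hn; revert X; induction Hn; intros X HX; inversion HX; subst.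
  - inversion Hn.
  - eapply IHHn; eauto.
Qed.

Lemma hnf_hred_irreducible H X : is_hnf H -> ~ hred H X.
Proof.
  intros Hh; revert X; induction Hh; intros X HX.
  - eapply neutral_hred_irreducible; eauto.
  - inversion HX; subst; eapply IHHh; eauto.
Qed.

Lemma hred_deterministic M X Y : hred M X -> hred M Y -> X = Y.
Proof.
  intros HX; revert Y; induction HX; intros Y HY; inversion HY; subst;
    try discriminate; f_equal; auto.
Qed.

Lemma hred_n_hnf_unique k M H k' H' :
  hred_n k M H -> is_hnf H -> hred_n k' M H' -> is_hnf H' -> k = k' /\ H = H'.
Proof.
  intros Hr; revert k' H'.
  induction Hr as [M|k M M1 H Hstep Hr IH]; intros k' H' Hh Hr' Hh';
    inversion Hr' as [|k0 ? M2 ? Hstep' Hr'']; subst.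
  - auto.
  - destruct (hnf_hred_irreducible _ _ Hh Hstep').
  - destruct (hnf_hred_irreducible _ _ Hh' Hstep).
  - rewrite <- (hred_deterministic _ _ _ Hstep Hstep') in Hr''.
    destruct (IH _ _ Hh Hr'' Hh'); subst; auto.
Qed.

Lemma hred_beta M N : hred M N -> beta M N.
Proof. induction 1; constructor; auto. Qed.

Lemma hred_n_beta_red k M N : hred_n k M N -> beta_red M N.
Proof.
  induction 1; [apply rt_refl|].
  eapply rt_trans; [apply rt_step, hred_beta|]; eauto.
Qed.

Lemma hred_n_trans a b X Y Z : hred_n a X Y -> hred_n b Y Z -> hred_n (a + b) X Z.
Proof. induction 1; intros; simpl; auto. econstructor; eauto. Qed.

Lemma hred_n_lam k P Q : hred_n k P Q -> hred_n k (Lam P) (Lam Q).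
Proof. induction 1; econstructor; eauto using hred_lam. Qed.

(** * Reduction can only shorten head normalization *)

Lemma par_neutral h h' : par h h' -> is_neutral h -> is_neutral h'.
Proof.
  induction 1; intros Hn; inversion Hn; subst; try constructor; auto.
  match goal with H : is_neutral (Lam _) |- _ => inversion H end.
Qed.

Lemma par_hnf H H' : par H H' -> is_hnf H -> is_hnf H'.
Proof.
  intros HP Hh; revert H' HP; induction Hh; intros H' HP.
  - constructor. eapply par_neutral; eauto.
  - inversion HP; subst. apply hnf_lam; auto.
Qed.

(* The [is_lam] equation lets a matched step be lifted under an application by [hred_app]. *)
Lemma hred_par_commute X X1 Y : hred X X1 -> par X Y ->
  par X1 Y \/ exists Y1, hred Y Y1 /\ par X1 Y1 /\ is_lam Y = is_lam X.
Proof.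
  intros HX; revert Y; induction HX as [P Q|M M' N Hlam HM IH|M M' HM IH]; intros Y HP.
  - inversion HP as [|? L ? Q' HL HQ| |? P' ? Q' HP' HQ']; subst.
    + inversion HL as [| |? P' HP'|]; subst. right.
      exists (subst 0 Q' P'); split; [apply hred_redex | split; auto using par_subst].
    + left. apply par_subst; auto.
  - inversion HP as [|? L ? N' HL HN| |]; subst; [|discriminate].
    destruct (IH _ HL) as [HL' | [L1 [HL1 [HM'L1 Hlam']]]].
    + left. constructor; auto.
    + right. exists (App L1 N'). split; [apply hred_app; congruence|].
      split; [constructor|]; auto.
  - inversion HP as [| |? L HL|]; subst.
    destruct (IH _ HL) as [HL' | [L1 [HL1 [HM'L1 _]]]].
    + left; constructor; auto.
    + right. exists (Lam L1). split; [constructor|split; [constructor|]]; auto.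
Qed.

Lemma par_hred_n_hnf k X H Y : hred_n k X H -> is_hnf H -> par X Y ->
  exists k' H', k' <= k /\ hred_n k' Y H' /\ is_hnf H' /\ par H H'.
Proof.
  intros Hr; revert Y; induction Hr as [X|k X X1 H Hstep Hr IH]; intros Y Hh HXY.
  - exists 0, Y. repeat split; eauto using hred_n, par_hnf.
  - destruct (hred_par_commute _ _ _ Hstep HXY) as [HX1Y | [Y1 [HY1 [HX1Y1 _]]]].
    + destruct (IH _ Hh HX1Y) as [k' [H' [Hk [HYH' [Hh' HHH']]]]].
      exists k', H'; repeat split; auto.
    + destruct (IH _ Hh HX1Y1) as [k' [H' [Hk [HY1H' [Hh' HHH']]]]].
      exists (S k'), H'; repeat split; eauto using hred_n. lia.
Qed.

Lemma beta_red_hred_n_hnf B A kB HB : beta_red B A -> hred_n kB B HB -> is_hnf HB ->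
  exists kA HA, kA <= kB /\ hred_n kA A HA /\ is_hnf HA /\ beta_red HB HA.
Proof.
  intros HR; revert kB HB; induction HR as [B A HBA|B|B C A _ IH1 _ IH2];
    intros kB HB Hr Hh.
  - destruct (par_hred_n_hnf _ _ _ _ Hr Hh (beta_par _ _ HBA))
      as [kA [HA [Hk [HrA [HhA HBHA]]]]].
    exists kA, HA; repeat split; auto using par_beta_red.
  - exists kB, HB; repeat split; auto. apply rt_refl.
  - destruct (IH1 _ _ Hr Hh) as [kC [HC [HkC [HrC [HhC HBHC]]]]].
    destruct (IH2 _ _ HrC HhC) as [kA [HA [HkA [HrA [HhA HCHA]]]]].
    exists kA, HA; repeat split; auto.
    + lia.
    + eapply rt_trans; eauto.
Qed.

(** * Standardization *)

Inductive whred : term -> term -> Prop :=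
| whred_redex P Q : whred (App (Lam P) Q) (subst 0 Q P)
| whred_app M M' N : whred M M' -> whred (App M N) (App M' N).

Definition whred_star : term -> term -> Prop := clos_refl_trans term whred.

Lemma whred_star_app M M' N : whred_star M M' -> whred_star (App M N) (App M' N).
Proof. apply (clos_rt_map whred whred (fun X => App X N)); auto using whred_app. Qed.

Lemma whred_lift M M' c : whred M M' -> whred (lift c M) (lift c M').
Proof.
  intros HM; revert c; induction HM; intros c; simpl.
  - rewrite lift_subst_ge by lia. constructor.
  - constructor; auto.
Qed.

Lemma whred_subst M M' n u : whred M M' -> whred (subst n u M) (subst n u M').
Proof.
  intros HM; revert n u; induction HM; intros n u; simpl.
  - rewrite subst_subst by lia. constructor.
  - constructor; auto.
Qed.

Lemma whred_hred M N : whred M N -> hred M N.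
Proof.
  induction 1 as [|M M' N HM IH]; constructor; auto.
  destruct HM; reflexivity.
Qed.

Lemma whred_star_lift c M M' : whred_star M M' -> whred_star (lift c M) (lift c M').
Proof. apply clos_rt_map; auto using whred_lift. Qed.

Lemma whred_star_subst n u M M' : whred_star M M' -> whred_star (subst n u M) (subst n u M').
Proof. apply clos_rt_map; auto using whred_subst. Qed.

Lemma whred_star_hred_n M N : whred_star M N -> exists k, hred_n k M N.
Proof.
  induction 1 as [M N HMN|M|M N P _ [k1 H1] _ [k2 H2]].
  - exists 1. econstructor; [apply whred_hred, HMN | constructor].
  - exists 0; constructor.
  - exists (k1 + k2). eapply hred_n_trans; eauto.
Qed.

(* Takahashi's inductive characterization of standard reduction. *)
Inductive std : term -> term -> Prop :=
| std_var M x : whred_star M (Var x) -> std M (Var x)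
| std_app M A B A' B' : whred_star M (App A B) -> std A A' -> std B B' -> std M (App A' B')
| std_lam M P P' : whred_star M (Lam P) -> std P P' -> std M (Lam P').

Lemma std_whred_star M M1 N : whred_star M M1 -> std M1 N -> std M N.
Proof.
  intros HM1 HS; destruct HS; econstructor; eauto; eapply rt_trans; eauto.
Qed.

Lemma std_refl M : std M M.
Proof. induction M; econstructor; eauto; apply rt_refl. Qed.

Lemma std_lift M N c : std M N -> std (lift c M) (lift c N).
Proof.
  intros HS; revert c.
  induction HS as [M x Hw|M A B A' B' Hw _ IHA _ IHB|M P P' Hw _ IHP]; intros c;
    apply (whred_star_lift c) in Hw; simpl in *.
  - destruct (c <=? x); constructor; auto.
  - econstructor; eauto.
  - econstructor; eauto.
Qed.

Lemma std_subst M M' n u u' : std M M' -> std u u' -> std (subst n u M) (subst n u' M').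
Proof.
  intros HS; revert n u u'.
  induction HS as [M x Hw|M A B A' B' Hw _ IHA _ IHB|M P P' Hw _ IHP]; intros n u u' Hu;
    apply (whred_star_subst n u) in Hw; simpl in *.
  - destruct (x =? n); [eapply std_whred_star; eauto|].
    destruct (n <? x); constructor; auto.
  - econstructor; eauto.
  - econstructor; eauto using std_lift.
Qed.

Lemma std_beta M N N' : std M N -> beta N N' -> std M N'.
Proof.
  intros HS HN; revert M HS; induction HN; intros X HS.
  - inversion HS as [| ? A B ? ? Hw HA HB|]; subst.
    inversion HA as [| |? P0 ? Hw2 HP]; subst.
    eapply std_whred_star; [|apply std_subst; eauto].
    eapply rt_trans; [exact Hw|].
    eapply rt_trans; [apply whred_star_app, Hw2|].
    apply rt_step, whred_redex.
  - inversion HS; subst. econstructor; eauto.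
  - inversion HS; subst. econstructor; eauto.
  - inversion HS; subst. econstructor; eauto.
Qed.

Theorem standardization M N : beta_red M N -> std M N.
Proof.
  intros HR. apply clos_rt_rtn1 in HR.
  induction HR; eauto using std_refl, std_beta.
Qed.

Lemma std_neutral M h : std M h -> is_neutral h -> exists n, is_neutral n /\ whred_star M n.
Proof.
  induction 1 as [M x Hw| M A B A' B' Hw _ IHA _ _|]; intros Hn.
  - exists (Var x); split; [constructor | exact Hw].
  - inversion Hn as [|? ? HA]; subst. destruct (IHA HA) as [n [Hn' HAn]].
    exists (App n B); split; [constructor; auto|].
    apply rt_trans with (App A B); [exact Hw | apply whred_star_app, HAn].
  - inversion Hn.
Qed.

Lemma std_hnf_head_normalizes M H : std M H -> is_hnf H ->
  exists k H', hred_n k M H' /\ is_hnf H'.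
Proof.
  intros HS Hh; revert M HS; induction Hh as [h Hn|h Hh IH]; intros M HS.
  - destruct (std_neutral _ _ HS Hn) as [n [Hn' Hw]].
    destruct (whred_star_hred_n _ _ Hw) as [k Hk].
    exists k, n; split; auto using hnf_neutral.
  - inversion HS as [| |? P ? Hw HP]; subst.
    destruct (IH _ HP) as [k [H' [Hr Hh']]].
    destruct (whred_star_hred_n _ _ Hw) as [k0 Hk0].
    exists (k0 + k), (Lam H'). split; auto using hnf_lam.
    eapply hred_n_trans; eauto using hred_n_lam.
Qed.

Lemma beta_red_hnf_head_normalizes M H : beta_red M H -> is_hnf H ->
  exists k H', hred_n k M H' /\ is_hnf H'.
Proof. intros HR; apply std_hnf_head_normalizes, standardization, HR. Qed.

Lemma hnf_data_sound M k H : hnf_data M = Some (k, H) -> hred_n k M H /\ is_hnf H.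
Proof.
  unfold hnf_data. destruct excluded_middle_informative as [e|]; [|discriminate].
  destruct (constructive_indefinite_description _ e) as [[k' H'] Hspec].
  intros E; injection E as <- <-; exact Hspec.
Qed.

Lemma hnf_data_complete M k H : hred_n k M H -> is_hnf H -> hnf_data M = Some (k, H).
Proof.
  intros Hr Hh. unfold hnf_data.
  destruct excluded_middle_informative as [e|n].
  - destruct (constructive_indefinite_description _ e) as [[k' H'] [Hr' Hh']]; simpl in *.
    destruct (hred_n_hnf_unique _ _ _ _ _ Hr Hh Hr' Hh'); subst; reflexivity.
  - exfalso; apply n; exists (k, H); auto.
Qed.

Lemma hnf_data_None M k H : hnf_data M = None -> hred_n k M H -> ~ is_hnf H.
Proof.
  intros E Hr Hh. rewrite (hnf_data_complete _ _ _ Hr Hh) in E. discriminate.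
Qed.

Lemma hnf_data_beta_red A B : beta_red B A ->
  (hnf_data B = None /\ hnf_data A = None) \/
  exists kA HA kB HB, hnf_data A = Some (kA, HA) /\ hnf_data B = Some (kB, HB) /\
     kA <= kB /\ is_hnf HB /\ beta_red HB HA.
Proof.
  intros HR. destruct (hnf_data B) as [[kB HB]|] eqn:EB.
  - right. destruct (hnf_data_sound _ _ _ EB) as [Hr Hh].
    destruct (beta_red_hred_n_hnf _ _ _ _ HR Hr Hh) as [kA [HA [Hk [HrA [HhA HBA]]]]].
    exists kA, HA, kB, HB. repeat split; auto using hnf_data_complete.
  - left. split; [reflexivity|].
    destruct (hnf_data A) as [[kA HA]|] eqn:EA; [exfalso|reflexivity].
    destruct (hnf_data_sound _ _ _ EA) as [HrA HhA].
    assert (HBA : beta_red B HA) by exact (rt_trans _ _ _ _ _ HR (hred_n_beta_red _ _ _ HrA)).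
    destruct (beta_red_hnf_head_normalizes _ _ HBA HhA) as [k [H [Hr Hh]]].
    exact (hnf_data_None _ _ _ EB Hr Hh).
Qed.

Lemma beta_red_neutral h h' : beta_red h h' -> is_neutral h -> is_neutral h'.
Proof. induction 1; eauto using par_neutral, beta_par. Qed.

Lemma beta_red_var_inv x Y : beta_red (Var x) Y -> Y = Var x.
Proof.
  intros HR; remember (Var x) as X eqn:EX.
  induction HR as [X Y HXY|X|X Y Z _ IH1 _ IH2]; subst.
  - inversion HXY.
  - reflexivity.
  - rewrite IH2; apply IH1; reflexivity.
Qed.

Lemma beta_red_lam_inv h Y : beta_red (Lam h) Y -> exists h', Y = Lam h' /\ beta_red h h'.
Proof.
  intros HR; remember (Lam h) as X eqn:EX; revert h EX.
  induction HR as [X Y HXY|X|X Y Z _ IH1 _ IH2]; intros h ->.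
  - inversion HXY; subst. exists M'; split; [reflexivity | apply rt_step; auto].
  - exists h; split; [reflexivity | apply rt_refl].
  - destruct (IH1 _ eq_refl) as [h1 [-> R1]]. destruct (IH2 _ eq_refl) as [h2 [-> R2]].
    exists h2; split; [reflexivity | eapply rt_trans; eauto].
Qed.

Lemma beta_red_neutral_app_inv h u Y : is_neutral h -> beta_red (App h u) Y ->
  exists h' u', Y = App h' u' /\ beta_red h h' /\ beta_red u u'.
Proof.
  intros Hn HR; remember (App h u) as X eqn:EX; revert h u Hn EX.
  induction HR as [X Y HXY|X|X Y Z _ IH1 _ IH2]; intros h u Hn ->.
  - inversion HXY; subst; [inversion Hn| |].
    + exists M', u; repeat split; [apply rt_step; auto | apply rt_refl].
    + exists h, N'; repeat split; [apply rt_refl | apply rt_step; auto].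
  - exists h, u; repeat split; apply rt_refl.
  - destruct (IH1 _ _ Hn eq_refl) as [h1 [u1 [-> [Rh1 Ru1]]]].
    destruct (IH2 _ _ (beta_red_neutral _ _ Rh1 Hn) eq_refl) as [h2 [u2 [-> [Rh2 Ru2]]]].
    exists h2, u2; repeat split; eapply rt_trans; eauto.
Qed.

Inductive hnf_reduct : term -> term -> Prop :=
| hnf_reduct_var x : hnf_reduct (Var x) (Var x)
| hnf_reduct_app h u h' u' :
    is_neutral h -> beta_red h h' -> beta_red u u' -> hnf_reduct (App h u) (App h' u')
| hnf_reduct_lam h h' : is_hnf h -> beta_red h h' -> hnf_reduct (Lam h) (Lam h').

Lemma beta_red_hnf_reduct H H' : is_hnf H -> beta_red H H' -> hnf_reduct H H'.
Proof.
  intros [? [x|h u Hn]|h Hh] HR.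
  - rewrite (beta_red_var_inv _ _ HR). constructor.
  - destruct (beta_red_neutral_app_inv _ _ _ Hn HR) as [h' [u' [-> [Rh Ru]]]].
    constructor; auto.
  - destruct (beta_red_lam_inv _ _ HR) as [h' [-> Rh]]. constructor; auto.
Qed.

(** * Comparing clocked Boehm trees *)

Definition atree_out (t : atree) : atree :=
  match t with
  | ABot => ABot | AVar a x => AVar a x | AApp a l r => AApp a l r | ALam a b => ALam a b
  end.

Lemma atree_out_eq t : t = atree_out t.
Proof. destruct t; reflexivity. Qed.

Lemma bt_spine_eq H : bt_go (BSpine H) =
  match H with
  | Var x => AVar None x
  | App H1 H2 => AApp None (bt_go (BSpine H1)) (bt_go (BFull H2))
  | Lam H' => ALam None (bt_go (BSpine H'))
  end.
Proof. rewrite (atree_out_eq (bt_go (BSpine H))). destruct H; reflexivity. Qed.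

Lemma BTc_eq M : BTc M =
  match hnf_data M with
  | None => ABot
  | Some (k, H) =>
    match H with
    | Var x => AVar (Some k) x
    | App H1 H2 => AApp (Some k) (bt_go (BSpine H1)) (BTc H2)
    | Lam H' => ALam (Some k) (bt_go (BSpine H'))
    end
  end.
Proof.
  unfold BTc; rewrite (atree_out_eq (bt_go (BFull M))); simpl.
  destruct (hnf_data M) as [[k [| |]]|]; reflexivity.
Qed.

Lemma subtree_at_BTc_cons M k H d p : hnf_data M = Some (k, H) ->
  subtree_at (BTc M) (d :: p) = subtree_at (bt_go (BSpine H)) (d :: p).
Proof. intros E. rewrite BTc_eq, bt_spine_eq, E. destruct H, d; reflexivity. Qed.

Definition subtree_le (o1 o2 : option atree) : Prop :=
  match o1, o2 with
  | None, None => True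
  | Some S1, Some S2 => root_label S1 = root_label S2 /\ ann_le (root_ann S1) (root_ann S2)
  | _, _ => False
  end.

Lemma subtree_le_beta_red p :
  (forall A B, beta_red B A -> subtree_le (subtree_at (BTc A) p) (subtree_at (BTc B) p)) /\
  (forall HA HB, is_hnf HB -> beta_red HB HA ->
     subtree_le (subtree_at (bt_go (BSpine HA)) p) (subtree_at (bt_go (BSpine HB)) p)).
Proof.
  induction p as [|d p [IHfull IHspine]].
  - split.
    + intros A B HR. rewrite !BTc_eq.
      destruct (hnf_data_beta_red _ _ HR)
        as [[-> ->]|(kA & HA & kB & HB & -> & -> & Hk & Hh & Hr)]; [simpl; auto|].
      destruct (beta_red_hnf_reduct _ _ Hh Hr); simpl; auto.
    + intros HA HB Hh Hr. rewrite !bt_spine_eq.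
      destruct (beta_red_hnf_reduct _ _ Hh Hr); simpl; auto.
  - assert (spine : forall HA HB, is_hnf HB -> beta_red HB HA ->
      subtree_le (subtree_at (bt_go (BSpine HA)) (d :: p))
                 (subtree_at (bt_go (BSpine HB)) (d :: p))).
    { intros HA HB Hh Hr. rewrite !bt_spine_eq.
      destruct (beta_red_hnf_reduct _ _ Hh Hr); destruct d; simpl; auto.
      - apply IHspine; auto using hnf_neutral.
      - apply IHfull; auto. }
    split; [|exact spine].
    intros A B HR.
    destruct (hnf_data_beta_red _ _ HR)
      as [[EB EA]|(kA & HA & kB & HB & EA & EB & Hk & Hh & Hr)].
    + rewrite !BTc_eq, EA, EB. destruct d; simpl; auto.
    + rewrite (subtree_at_BTc_cons _ _ _ _ _ EA), (subtree_at_BTc_cons _ _ _ _ _ EB).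
      auto.
Qed.

Theorem beta_red_BTc_le A B : beta_red B A -> tree_le (BTc A) (BTc B).
Proof. intros HR p. exact (proj1 (subtree_le_beta_red p) A B HR). Qed.

Theorem theorem4p6 (M N : term) :
  ~ (exists M' : term, beta_red M M' /\ tree_le (BTc M') (BTc N)) ->
  ~ beta_eq M N.
Proof.
  intros Hno Heq.
  destruct (church_rosser _ _ Heq) as [Z [HMZ HNZ]].
  apply Hno. exists Z. split; [exact HMZ | exact (beta_red_BTc_le _ _ HNZ)].
Qed.
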